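(* Let $B=\bigoplus_{i\in\mathbb{Z}}\mathbb{Z}_2$ and let $L_2=B\rtimes\mathbb{Z}$ be the lamplighter group, with elements written $((x_i),k)$ and multiplication $((x_i),k)\cdot((y_i),\ell)=((x_i+y_{i-k})_i,\,k+\ell)$. Equip $L_2$ with the word metric with respect to the generating set $\{t,at\}$, where $t=(0,1)$ and $at=(e_0,1)$ ($e_0$ the sequence with a single $1$ at index $0$); the corresponding Cayley graph is the Diestel–Leader graph $DL(2,2)$. Let $\Psi:L_2\to L_2$ be an isometry that is pattern preserving, i.e. there are a permutation $\sigma$ of the set of left cosets of $\langle t\rangle$ and a constant $C'\ge 0$ with $d_{\mathcal H}(\Psi(g\langle t\rangle),\sigma(g\langle t\rangle))<C'$ for all $g\in L_2$. Identify the left coset $((x_i),k)\langle t\rangle$ with $(x_i)\in B$, and let $\psi:B\to B$ be the induced permutation. Then there is $g=((z_i),k)\in L_2$ such that either $\psi=\lambda_g$ or $\psi=\lambda_g\circ\iota$, where $\lambda_g(x)=(z_i+x_{i-k})_i$ is the map induced by left multiplication by $g$ and $\iota((x_i)_i)=(x_{-i})_i$. In particular $\psi$ is a generalized affine map.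
   Context: $d_{\mathcal H}$ denotes Hausdorff distance. An affine map of $B$ is a map $x\mapsto\varphi(x)+c$ with $\varphi$ a group automorphism of $B$ and $c\in B$. A map of $B$ is generalized affine if it is the composition of an affine map of $B$ with a shift map $(x_i)\mapsto(x_{i+k})$ for some $k\in\mathbb{Z}$. *)

From HB Require Import structures.
From mathcomp Require Import all_boot all_order all_algebra finmap.
From mathcomp Require Import boolp.
Set Implicit Arguments. Unset Strict Implicit. Unset Printing Implicit Defensive.
Import Order.TTheory GRing.Theory Num.Theory.
Local Open Scope fset_scope.
Local Open Scope ring_scope.

(* B = (+)_{i in Z} Z_2, an element (x_i) being represented by its (finite)
   support {i | x_i = 1}; addition in B is symmetric difference. *)
Definition B := {fset int}.
Definition Badd (X Y : B) : B := (X `\` Y) `|` (Y `\` X).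
(* (shift k Y) is the support of (y_{i-k})_i *)
Definition shift (k : int) (Y : B) : B := [fset i + k | i in Y].

Definition L2 := (B * int)%type.
Definition lmul (g h : L2) : L2 := (Badd g.1 (shift g.2 h.1), g.2 + h.2).
Definition linv (g : L2) : L2 := (shift (- g.2) g.1, - g.2).
Definition t_gen : L2 := (fset0, 1).
Definition at_gen : L2 := ([fset (0 : int)], 1).
Definition gens : seq L2 := [:: t_gen; at_gen; linv t_gen; linv at_gen].

Fixpoint reach (n : nat) (g h : L2) : bool :=
  match n with
  | 0 => g == h
  | n'.+1 => has (fun s => reach n' (lmul g s) h) gens
  end.

(* word metric: least length of a path (0 if none exists; the graph is in fact
   connected) *)
Definition word_dist (g h : L2) : nat :=
  match pselect (exists n, reach n g h) with
  | left P => ex_minn P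
  | right _ => 0%N
  end.

Definition word_isometry (Psi : L2 -> L2) : Prop :=
  forall g h, word_dist (Psi g) (Psi h) = word_dist g h.

(* the left coset g<t> = {(x, k + n) : n in Z} of g = (x, k), indexed by x *)
Definition coset (x : B) : L2 -> Prop := fun h => h.1 = x.

Definition img (f : L2 -> L2) (A : L2 -> Prop) : L2 -> Prop :=
  fun h => exists a, A a /\ f a = h.

Definition hausdorff_lt (A A' : L2 -> Prop) (C : nat) : Prop :=
  (forall a, A a -> exists b, A' b /\ (word_dist a b < C)%N) /\
  (forall b, A' b -> exists a, A a /\ (word_dist b a < C)%N).

Definition lam (g : L2) (x : B) : B := (lmul g (x, 0)).1.
Definition iota_B (x : B) : B := [fset - i | i in x].

From HB Require Import structures.
From mathcomp Require Import all_boot all_order all_algebra finmap.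
From mathcomp Require Import boolp.
From mathcomp Require Import zify.
Set Implicit Arguments. Unset Strict Implicit. Unset Printing Implicit Defensive.
Import Order.TTheory GRing.Theory Num.Theory.
Local Open Scope fset_scope.
Local Open Scope ring_scope.

(* The word metric of DL(2,2) has a closed form: to go from (x, k) to (y, l) the
   lamplighter must visit every lamp where x and y differ, so the distance is the
   length of a shortest walk from height k to height l sweeping an interval that
   contains these lamps.  Hence heights are 1-Lipschitz and the lamps where a
   point differs from a coset lie within its distance to that coset.
   Along a coset, Psi stays C-close to the coset of psi x.  Three points of a
   coset, far apart, map to a geodesic whose middle point can only be exact if
   it lies on the coset of psi x; so Psi maps every coset onto a coset through
   an isometry k |-> +-k + s of Z.  Two cosets differing in the lamp m are joined
   by two edges, which forces their images to share orientation and offset and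
   to differ in the single image lamp of m.  Induction on the finite support of x
   then writes psi x as psi 0 plus a shift of x or of its reflection. *)

Lemma in_Badd (X Y : B) i : (i \in Badd X Y) = (i \in X) (+) (i \in Y).
Proof. by rewrite !inE; case: (i \in X); case: (i \in Y). Qed.

Lemma in_shift k (Y : B) i : (i \in shift k Y) = (i - k \in Y).
Proof.
apply/imfsetP/idP => [[j /= jY ->]|iY]; first by rewrite addrK.
by exists (i - k) => //; rewrite subrK.
Qed.

Lemma in_iota_B (X : B) i : (i \in iota_B X) = (- i \in X).
Proof.
apply/imfsetP/idP => [[j /= jX ->]|iX]; first by rewrite opprK.
by exists (- i) => //; rewrite opprK.
Qed.

Lemma Badd0 X : Badd X fset0 = X.
Proof. by apply/fsetP => i; rewrite in_Badd inE addbF. Qed.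

Lemma BaddC X Y : Badd X Y = Badd Y X.
Proof. by apply/fsetP => i; rewrite !in_Badd addbC. Qed.

Lemma BaddKl X Y : Badd X (Badd X Y) = Y.
Proof. by apply/fsetP => i; rewrite !in_Badd addKb. Qed.

Lemma BaddKr X Y : Badd (Badd X Y) Y = X.
Proof. by apply/fsetP => i; rewrite !in_Badd addbK. Qed.

Lemma Baddxx X : Badd X X = fset0.
Proof. by apply/fsetP => i; rewrite in_Badd addbb inE. Qed.

Lemma BaddKA X Y Z : Badd (Badd X Z) (Badd Y Z) = Badd X Y.
Proof. by apply/fsetP => i; rewrite !in_Badd addbACA addbb addbF. Qed.

Lemma Badd_eq0 X Y : (Badd X Y == fset0) = (X == Y).
Proof. by apply/eqP/eqP => [XY|->]; [rewrite -(BaddKl X Y) XY Badd0 | exact: Baddxx]. Qed.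

Lemma lmul_t_gen x k : lmul (x, k) t_gen = (x, k + 1).
Proof. by congr (_, _); apply/fsetP => i; rewrite in_Badd in_shift inE addbF. Qed.

Lemma lmul_at_gen x k : lmul (x, k) at_gen = (Badd x [fset k], k + 1).
Proof. by congr (_, _); apply/fsetP => i; rewrite !in_Badd in_shift !inE subr_eq0. Qed.

Lemma lmul_t_genV x k : lmul (x, k) (linv t_gen) = (x, k - 1).
Proof. by congr (_, _); apply/fsetP => i; rewrite in_Badd !in_shift inE addbF. Qed.

Lemma lmul_at_genV x k : lmul (x, k) (linv at_gen) = (Badd x [fset k - 1], k - 1).
Proof.
congr (_, _); apply/fsetP => i; rewrite !in_Badd !in_shift !inE /=.
by congr (_ (+) _); apply/eqP/eqP; lia.
Qed.

(* The edges of DL(2,2) given by t, at and their inverses: the lamp between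
   heights m and m + 1 is the lamp m. *)
Definition dl_edge (g h : L2) : Prop :=
  `|g.2 - h.2| = 1 /\ (h.1 = g.1 \/ h.1 = Badd g.1 [fset Num.min g.2 h.2]).

Lemma dl_edge_sym g h : dl_edge g h -> dl_edge h g.
Proof.
case: g h => x k [y l] [/= kl [->|->]]; split=> /=; try lia; first by left.
by right; rewrite minC BaddKr.
Qed.

Lemma reachSP n g h : reach n.+1 g h <-> exists2 g', dl_edge g g' & reach n g' h.
Proof.
case: g => x k; rewrite /= lmul_t_gen lmul_at_gen lmul_t_genV lmul_at_genV orbF.
split=> [/or4P[] gh | [[y l] [/= kl xy] gh]]; last first.
- have {kl} : l = k + 1 \/ l = k - 1 by lia.
  case=> ?; subst l.
  + rewrite (_ : Num.min k (k + 1) = k) in xy; last by lia.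
    by case: xy gh => -> ->; rewrite ?orbT.
  + rewrite (_ : Num.min k (k - 1) = k - 1) in xy; last by lia.
    by case: xy gh => -> ->; rewrite ?orbT.
all: (eexists; last exact: gh); split=> /=; try lia.
all: by [left | right; congr (Badd _ [fset _]); lia].
Qed.

Lemma reach_cat n m g h f : reach n g h -> reach m h f -> reach (n + m) g f.
Proof.
elim: n g => [|n IH] g; first by move=> /eqP->.
by move=> /reachSP[g' gg' g'h] hf; apply/reachSP; exists g' => //; apply: IH hf.
Qed.

Lemma reach_sym n g h : reach n g h -> reach n h g.
Proof.
elim: n g => [|n IH] g; first by rewrite /= eq_sym.
move=> /reachSP[g' /dl_edge_sym g'g /IH hg']; rewrite -addn1.
by apply: reach_cat hg' _; apply/reachSP; exists g => /=.
Qed.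

Lemma reach_sweep (n : nat) x k E : {in E, forall i, k <= i < k + n%:Z} ->
  reach n (x, k) (Badd x E, k + n%:Z).
Proof.
elim: n x k E => [|n IH] x k E E_bnd.
  have -> : E = fset0 by apply/fsetP => i; rewrite inE; apply/negP => /E_bnd; lia.
  by rewrite Badd0 addr0 /=.
apply/reachSP; exists (Badd x (E `&` [fset k]), k + 1).
  split=> /=; first lia.
  have -> : Num.min k (k + 1) = k by lia.
  by rewrite fsetI1; case: ifP => _; [right | left; rewrite Badd0].
have -> : Badd x E = Badd (Badd x (E `&` [fset k])) (E `\ k).
  by apply/fsetP => i; rewrite !in_Badd !inE; case: eqVneq; rewrite ?andbF ?addbF ?andbT.
rewrite (_ : k + n.+1%:Z = k + 1 + n%:Z); last by lia.
by apply: IH => i; rewrite !inE => /andP[/eqP ik /E_bnd]; lia.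
Qed.

Definition window (D : B) (k l lo hi : int) : Prop :=
  [/\ lo <= k <= hi, lo <= l <= hi & {in D, forall i, lo <= i < hi}].

(* the length of a shortest walk from height k to height l visiting lo and hi *)
Definition tour_len (k l lo hi : int) : int := 2 * (hi - lo) - `|k - l|.

Lemma window_sym D k l lo hi : window D k l lo hi -> window D l k lo hi.
Proof. by case. Qed.

Lemma reach_window n x k y l : reach n (x, k) (y, l) ->
  exists lo hi, window (Badd x y) k l lo hi /\ tour_len k l lo hi <= n%:Z.
Proof.
elim: n x k => [|n IH] x k.
  move=> /eqP[-> ->]; exists l, l; rewrite /tour_len.
  split; last lia.
  by split=> [||i]; rewrite ?lexx // Baddxx inE.
move=> /reachSP[[x' k'] [/= kk' xx'] /IH[lo [hi [[k'w lw Dw] len]]]].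
have D_step i : i \in Badd x y -> i \in Badd x' y \/ i = Num.min k k'.
  case: xx' => ->; first by left.
  rewrite !in_Badd inE; case: eqVneq => [->|_]; first by right.
  by rewrite addbF; left.
exists (Num.min lo k), (Num.max hi k); rewrite /tour_len in len *.
split; last lia.
split; try lia.
by move=> i /D_step[/Dw|->]; lia.
Qed.

Lemma window_reach x k y l lo hi : window (Badd x y) k l lo hi ->
  exists2 n : nat, n%:Z = tour_len k l lo hi & reach n (x, k) (y, l).
Proof.
wlog kl : x k y l / k <= l.
  move=> wlog_kl w; have [kl|lk] := lerP k l; first exact: wlog_kl.
  have [|n len /reach_sym yx] := wlog_kl y l x k (ltW lk).
    by rewrite BaddC; apply: window_sym.
  by exists n => //; rewrite len /tour_len distrC.
case=> /andP[lok khi] /andP[lol lhi] Dw.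
have descend z (a : int) (n : nat) : reach n (z, a + n%:Z) (z, a).
  apply: reach_sym; have := @reach_sweep n z a fset0.
  by rewrite Badd0; apply=> i; rewrite inE.
have [n1 ek] : exists n : nat, k = lo + n%:Z by exists `|k - lo|%N; lia.
have [n2 ehi] : exists n : nat, hi = lo + n%:Z by exists `|hi - lo|%N; lia.
have [n3 ehl] : exists n : nat, hi = l + n%:Z by exists `|hi - l|%N; lia.
have sweep : reach n2 (x, lo) (y, hi).
  by rewrite -[y](BaddKl x) ehi; apply: reach_sweep => i /Dw; lia.
exists (n1 + n2 + n3)%N; first by rewrite /tour_len; lia.
rewrite ek; apply: reach_cat (reach_cat (descend _ _ _) sweep) _.
by rewrite ehl; apply: descend.
Qed.

Lemma window_exists D k l : exists lo hi, window D k l lo hi.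
Proof.
have [M DM] : exists M, {in D, forall i, (`|i| <= M)%N}.
  by exists (\max_(i <- D) `|i|)%N => i iD; apply: leq_bigmax_seq.
exists (- M%:Z - `|k| - `|l|), (M%:Z + `|k| + `|l| + 1).
by split; [lia | lia | move=> i /DM; lia].
Qed.

Lemma reach_exists g h : exists n, reach n g h.
Proof.
case: g h => x k [y l]; have [lo [hi w]] := window_exists (Badd x y) k l.
by have [n _ xy] := window_reach w; exists n.
Qed.

Lemma reach_word_dist g h : reach (word_dist g h) g h.
Proof.
rewrite /word_dist; case: pselect => [P|nP]; first by case: ex_minnP.
by case: nP; apply: reach_exists.
Qed.

Lemma word_dist_min n g h : reach n g h -> (word_dist g h <= n)%N.
Proof.
move=> gh; rewrite /word_dist; case: pselect => [P|nP]; last by case: nP; exists n.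
by case: ex_minnP => m _; apply.
Qed.

Lemma word_distC g h : word_dist g h = word_dist h g.
Proof. by apply/eqP; rewrite eqn_leq !word_dist_min // reach_sym // reach_word_dist. Qed.

Lemma word_dist_triangle g h f : (word_dist g f <= word_dist g h + word_dist h f)%N.
Proof. by apply/word_dist_min/reach_cat; apply: reach_word_dist. Qed.

Lemma word_dist_le_window x k y l lo hi : window (Badd x y) k l lo hi ->
  (word_dist (x, k) (y, l))%:Z <= tour_len k l lo hi.
Proof. by case/window_reach=> n <- /word_dist_min; rewrite lez_nat. Qed.

Lemma word_dist_window x k y l : exists lo hi,
  window (Badd x y) k l lo hi /\ tour_len k l lo hi <= (word_dist (x, k) (y, l))%:Z.
Proof. exact/reach_window/reach_word_dist. Qed.

Lemma height_le_word_dist g h : `|g.2 - h.2| <= (word_dist g h)%:Z.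
Proof.
case: g h => x k [y l] /=.
by have [lo [hi [[] ]]] := word_dist_window x k y l; rewrite /tour_len; lia.
Qed.

Lemma word_dist_lamps g h : {in Badd g.1 h.1, forall i, `|i - g.2| <= (word_dist g h)%:Z}.
Proof.
case: g h => x k [y l] /= i iD.
have [lo [hi [[kw lw /(_ i iD) iw] dw]]] := word_dist_window x k y l.
by rewrite /tour_len in dw; lia.
Qed.

Lemma word_dist_coset x k l : (word_dist (x, k) (x, l))%:Z = `|k - l|.
Proof.
apply/eqP; rewrite eq_le (height_le_word_dist (x, k) (x, l)) andbT.
have w : window (Badd x x) k l (Num.min k l) (Num.max k l).
  by split=> [||i]; [lia | lia | rewrite Baddxx inE].
by apply: le_trans (word_dist_le_window w) _; rewrite /tour_len; lia.
Qed.

Lemma word_dist_single X Y a b e : Badd X Y = [fset e] ->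
  (word_dist (X, a) (Y, b))%:Z =
  tour_len a b (Num.min (Num.min a b) e) (Num.max (Num.max a b) (e + 1)).
Proof.
move=> XY; apply/eqP; rewrite eq_le word_dist_le_window; last first.
  by split=> [||i]; rewrite ?XY ?inE; [lia | lia | move/eqP->; lia].
have [lo [hi [[ak bk /(_ e)]]]] := word_dist_window X a Y b.
by rewrite XY inE eqxx /tour_len => /(_ isT); lia.
Qed.

Lemma word_dist1_edge g h : word_dist g h = 1%N -> dl_edge g h.
Proof.
by move=> d1; have := reach_word_dist g h; rewrite d1 => /reachSP[g' gg' /eqP<-].
Qed.

Lemma geodesic_mid_coset (X : B) (c : int) (g1 g2 g3 : L2) :
  {in Badd g1.1 X, forall i, `|i - g1.2| <= c} ->
  {in Badd g2.1 X, forall i, `|i - g2.2| <= c} ->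
  {in Badd g3.1 X, forall i, `|i - g3.2| <= c} ->
  g1.2 + 2 * c < g2.2 -> g2.2 + 2 * c < g3.2 ->
  word_dist g1 g3 = (word_dist g1 g2 + word_dist g2 g3)%N ->
  g2.1 = X.
Proof.
case: g1 g2 g3 => [z1 h1] [z2 h2] [z3 h3] /= near1 near2 near3 h12 h23 geod.
apply/eqP; rewrite -Badd_eq0; apply/negPn/negP => /fset0Pn[e e2].
have lamps_apart z h : {in Badd z X, forall i, `|i - h| <= c} -> 2 * c < `|h - h2| ->
    {in Badd z X, forall i, i \in Badd z z2} /\ {in Badd z2 X, forall i, i \in Badd z2 z}.
  move=> near far; split=> i iD; rewrite -(BaddKA _ _ X) in_Badd iD.
    by have /negbTE-> : i \notin Badd z2 X by apply/negP => /near2; move/near: iD; lia.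
  by have /negbTE-> : i \notin Badd z X by apply/negP => /near; move/near2: iD; lia.
have c_ge0 : 0 <= c by move/near2: e2; lia.
have [in1 /(_ e e2) e1] := lamps_apart z1 h1 near1 ltac:(lia).
have [in3 /(_ e e2) e3] := lamps_apart z3 h3 near3 ltac:(lia).
have [lo1 [hi1 [[hw1 hw2 D12] d12]]] := word_dist_window z1 h1 z2 h2.
have [lo2 [hi2 [[hw2' hw3 D23] d23]]] := word_dist_window z2 h2 z3 h3.
rewrite BaddC in e1.
(* e lies in both windows, so the window [lo1, hi2] gives a shorter tour. *)
have w : window (Badd z1 z3) h1 h3 lo1 hi2.
  split=> [||i]; try lia.
  rewrite -(BaddKA z1 z3 X) in_Badd.
  case i1: (i \in Badd z1 X); case i3: (i \in Badd z3 X) => //= _.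
    by have := D12 i (in1 i i1); move/near1: i1; lia.
  by have := D23 i; rewrite BaddC => /(_ (in3 i i3)); move/near3: i3; lia.
have := D12 e e1; have := D23 e e3; have := word_dist_le_window w.
by rewrite /tour_len in d12 d23 *; lia.
Qed.

Lemma lam0 g : lam g fset0 = g.1.
Proof. by apply/fsetP => i; rewrite /lam /= in_Badd in_shift inE addbF. Qed.

Lemma lam_fset1U g m x : m \notin x -> lam g (m |` x) = Badd (lam g x) [fset m + g.2].
Proof.
move=> mx; apply/fsetP => i; rewrite /lam /= !in_Badd !in_shift !inE -addbA.
congr (_ (+) _); rewrite (_ : (i == m + g.2) = (i - g.2 == m)); last first.
  by apply/eqP/eqP; lia.
by case: eqVneq => [->|_]; rewrite ?(negbTE mx) ?addbF.
Qed.

Lemma iota_B0 : iota_B fset0 = fset0.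
Proof. by apply/fsetP => i; rewrite in_iota_B !inE. Qed.

Lemma iota_B_fset1U m x : iota_B (m |` x) = (- m) |` iota_B x.
Proof. by apply/fsetP => i; rewrite !inE !in_iota_B !inE eqr_oppLR. Qed.

Definition isoZ (b : bool) (s k : int) : int := (if b then k else - k) + s.

Lemma isometry_isoZ (f : int -> int) : (forall k l, `|f k - f l| = `|k - l|) ->
  exists b s, f =1 isoZ b s.
Proof.
move=> f_iso; exists (f 1 - f 0 == 1), (f 0) => k; rewrite /isoZ.
have := f_iso 1 0; have := f_iso k 0; have := f_iso k 1.
by case: eqVneq; lia.
Qed.

Section PatternPreservingIsometry.

Variables (Psi : L2 -> L2) (psi : B -> B) (C : nat).
Hypothesis Psi_isometry : word_isometry Psi.
Hypothesis Psi_near : forall x k, exists h, (word_dist (Psi (x, k)) (psi x, h) < C)%N.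
Hypothesis psi_inj : injective psi.

Lemma Psi_coset_dist x k l : (word_dist (Psi (x, k)) (Psi (x, l)))%:Z = `|k - l|.
Proof. by rewrite Psi_isometry word_dist_coset. Qed.

Lemma Psi_height_lipschitz x k l : `|(Psi (x, k)).2 - (Psi (x, l)).2| <= `|k - l|.
Proof. by rewrite -(Psi_coset_dist x k l) height_le_word_dist. Qed.

Lemma Psi_height_coarse x k l : `|k - l| <= `|(Psi (x, k)).2 - (Psi (x, l)).2| + 4 * C%:Z.
Proof.
have [hk dk] := Psi_near x k; have [hl dl] := Psi_near x l.
have := height_le_word_dist (Psi (x, k)) (psi x, hk).
have := height_le_word_dist (Psi (x, l)) (psi x, hl).
have := word_dist_triangle (Psi (x, k)) (psi x, hk) (Psi (x, l)).
have := word_dist_triangle (psi x, hk) (psi x, hl) (Psi (x, l)).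
rewrite -(Psi_coset_dist x k l) (word_distC (psi x, hl)) => /=.
by have := word_dist_coset (psi x) hk hl; lia.
Qed.

Lemma Psi_lamps x k :
  {in Badd (Psi (x, k)).1 (psi x), forall i, `|i - (Psi (x, k)).2| <= C%:Z}.
Proof.
move=> i iD; have [h dh] := Psi_near x k.
apply: le_trans (@word_dist_lamps (Psi (x, k)) (psi x, h) i iD) _.
by rewrite lez_nat ltnW.
Qed.

Lemma Psi_coset x k : (Psi (x, k)).1 = psi x.
Proof.
(* With N > 6 C the images of k - N, k, k + N have heights spaced by more than
   2 C, in monotone order. *)
have [N N_def] : exists N : int, N = 6 * C%:Z + 1 by eexists.
have ht a b := Psi_height_lipschitz x a b; have hc a b := Psi_height_coarse x a b.
have d a b := Psi_coset_dist x a b; have near a := @Psi_lamps x a.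
move: (ht (k - N) k) (ht k (k + N)) (ht (k - N) (k + N)).
move: (hc (k - N) k) (hc k (k + N)) (hc (k - N) (k + N)).
move: (d (k - N) k) (d k (k + N)) (d (k - N) (k + N)).
set g1 := Psi (x, k - N); set g2 := Psi (x, k); set g3 := Psi (x, k + N).
move=> d12 d23 d13 hc12 hc23 hc13 ht12 ht23 ht13.
have [[h12 h23]|[h32 h21]] : (g1.2 + 2 * C%:Z < g2.2 /\ g2.2 + 2 * C%:Z < g3.2) \/
                             (g3.2 + 2 * C%:Z < g2.2 /\ g2.2 + 2 * C%:Z < g1.2) by lia.
- by apply: (@geodesic_mid_coset _ _ g1 g2 g3) (near _) (near _) (near _) h12 h23 _; lia.
- apply: (@geodesic_mid_coset _ _ g3 g2 g1) (near _) (near _) (near _) h32 h21 _.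
  by rewrite !(word_distC g3) (word_distC g2 g1); lia.
Qed.

Lemma Psi_coset_isoZ x : exists b s, forall k, Psi (x, k) = (psi x, isoZ b s k).
Proof.
have Pk k : Psi (x, k) = (psi x, (Psi (x, k)).2).
  by rewrite -(Psi_coset x k); case: (Psi (x, k)).
have [|b [s f_iso]] := @isometry_isoZ (fun k => (Psi (x, k)).2).
  by move=> k l; rewrite -(Psi_coset_dist x k l) (Pk k) (Pk l) word_dist_coset.
by exists b, s => k; rewrite -f_iso -Pk.
Qed.

(* The two edges (x, m) -- (y, m + 1) and (x, m + 1) -- (y, m) must toggle the same lamp
   of psi x, which forces equal orientations and offsets. *)
Lemma Psi_adjacent_cosets x y m b s b' s' :
  Badd x y = [fset m] ->
  (forall k, Psi (x, k) = (psi x, isoZ b s k)) ->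
  (forall k, Psi (y, k) = (psi y, isoZ b' s' k)) ->
  [/\ b' = b, s' = s & Badd (psi x) (psi y) = [fset (if b then m else - m - 1) + s]].
Proof.
move=> xy Px Py.
have edge k l : (word_dist (x, k) (y, l))%:Z = 1 ->
    `|isoZ b s k - isoZ b' s' l| = 1 /\
    Badd (psi x) (psi y) = [fset Num.min (isoZ b s k) (isoZ b' s' l)].
  rewrite -Psi_isometry Px Py => /eqP; rewrite eqz_nat => /eqP /word_dist1_edge.
  move=> [/= kl [/psi_inj yx | ->]]; last by rewrite BaddKl.
  by move: (fset11 m); rewrite -xy yx Baddxx inE.
have [e1 lamp1] := edge m (m + 1) ltac:(rewrite (word_dist_single _ _ xy) /tour_len; lia).
have [e2 lamp2] := edge (m + 1) m ltac:(rewrite (word_dist_single _ _ xy) /tour_len; lia).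
have e12 : Num.min (isoZ b s (m + 1)) (isoZ b' s' m) =
    Num.min (isoZ b s m) (isoZ b' s' (m + 1)).
  by apply/fset1P; rewrite -lamp1 lamp2 fset11.
rewrite lamp1; rewrite /isoZ in e1 e2 e12 *; clear edge lamp1 lamp2 Px Py.
case: b b' e1 e2 e12 => [] [] /= e1 e2 e12; [| exfalso; lia | exfalso; lia |].
all: by split; [| lia | congr [fset _]; lia].
Qed.

Lemma psi_lam_isoZ b s : (forall k, Psi (fset0, k) = (psi fset0, isoZ b s k)) ->
  forall x, (forall k, Psi (x, k) = (psi x, isoZ b s k)) /\
    psi x = lam (psi fset0, if b then s else s - 1) (if b then x else iota_B x).
Proof.
move=> P0; elim/fset1U_rect => [|m x mx [Px psi_x]].
  by split=> //; case: b {P0}; rewrite ?iota_B0 lam0.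
have [b' [s' Pmx]] := Psi_coset_isoZ (m |` x).
have xmx : Badd x (m |` x) = [fset m].
  apply/fsetP => i; rewrite in_Badd !inE.
  by case: eqVneq => [->|_] /=; rewrite ?(negbTE mx) ?addbb.
have [? ? lamp] := Psi_adjacent_cosets xmx Px Pmx; subst b' s'.
split=> //; rewrite -(BaddKl (psi x) (psi (m |` x))) lamp psi_x.
case: b {P0 Px Pmx lamp psi_x}; first by rewrite lam_fset1U.
rewrite iota_B_fset1U lam_fset1U ?in_iota_B ?opprK //=.
by congr (Badd _ [fset _]); lia.
Qed.

Lemma psi_generalized_affine :
  exists g, (forall x, psi x = lam g x) \/ (forall x, psi x = lam g (iota_B x)).
Proof.
have [b [s /psi_lam_isoZ psi_lam]] := Psi_coset_isoZ fset0.
exists (psi fset0, if b then s else s - 1).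
by case: b psi_lam => psi_lam; [left | right] => x; case: (psi_lam x).
Qed.

End PatternPreservingIsometry.

Theorem theorem1p1 (Psi : L2 -> L2) (psi : B -> B) (C' : nat) :
  ssrfun.bijective Psi -> word_isometry Psi ->
  ssrfun.bijective psi ->
  (forall g : L2, hausdorff_lt (img Psi (coset g.1)) (coset (psi g.1)) C') ->
  exists g : L2, (forall x, psi x = lam g x) \/ (forall x, psi x = lam g (iota_B x)).
Proof.
move=> _ Psi_iso [psi' psiK _] Psi_patterns.
apply: (@psi_generalized_affine Psi psi C') => //; last exact: can_inj psiK.
move=> x k; have [near _] := Psi_patterns (x, k).
have [[y h] [/= <- d]] := near (Psi (x, k)) (ex_intro _ (x, k) (conj erefl erefl)).
by exists h.
Qed.
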